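(* Let $q$ be a prime power and $b,k,r$ positive integers. Let $\boldsymbol{x}=(x^{(1)},x^{(2)})\in\mathbb{F}_q^{k+r}$ and $\boldsymbol{y}=(y^{(1)},y^{(2)})\in\mathbb{F}_q^{k+r}$ with $x^{(1)},y^{(1)}\in\mathbb{F}_q^k$ and $x^{(2)},y^{(2)}\in\mathbb{F}_q^r$. Then \[ d_b(x^{(1)},y^{(1)})+d_b(x^{(2)},y^{(2)})-(b-1)\le d_b(\boldsymbol{x},\boldsymbol{y})\le d_b(x^{(1)},y^{(1)})+d_b(x^{(2)},y^{(2)})+(b-1). \]
   Context: For $\boldsymbol{z}=(z_0,\ldots,z_{n-1})\in\mathbb{F}_q^n$, the $b$-symbol read vector is $\pi_b(\boldsymbol{z})=[(z_0,\ldots,z_{b-1}),(z_1,\ldots,z_b),\ldots,(z_{n-1},z_0,\ldots,z_{b-2})]$ with indices taken modulo $n$, and the $b$-symbol distance is $d_b(\boldsymbol{z},\boldsymbol{w})=d_H(\pi_b(\boldsymbol{z}),\pi_b(\boldsymbol{w}))$, the Hamming distance between the read vectors viewed as words over $\mathbb{F}_q^b$. The paper's standing assumption is $2<b<k$. *)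

From mathcomp Require Import all_boot all_order all_algebra all_field.
Set Implicit Arguments. Unset Strict Implicit. Unset Printing Implicit Defensive.

Definition cyc_idx (n : nat) (i : 'I_n) (j : nat) : 'I_n :=
  Ordinal (ltn_pmod (i + j) (leq_ltn_trans (leq0n i) (ltn_ord i))).

Definition bread (F : Type) (b n : nat) (z : 'rV[F]_n) (i : 'I_n) : {ffun 'I_b -> F} :=
  [ffun j : 'I_b => z ord0 (cyc_idx i j)].

(* b-symbol distance: Hamming distance between the read vectors,
   viewed as words over F^b. *)
Definition bdist (F : finFieldType) (b n : nat) (x y : 'rV[F]_n) : nat :=
  #|[set i : 'I_n | bread b x i != bread b y i]|.

From mathcomp Require Import all_boot all_order all_algebra all_field.
From mathcomp Require Import zify.
Set Implicit Arguments. Unset Strict Implicit. Unset Printing Implicit Defensive.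

(* Let f be the periodic indicator of the positions where two words differ.
   A window of length b meets an error iff its first error sits at some
   offset c < b, so d_b = sum_(c < b) N_c, where N_c counts the windows whose
   first error is at offset exactly c; N_0 is the Hamming distance, which is
   additive.  Concatenation does not affect the windows lying inside a block,
   and for each c at most one window starting in a block has its first error
   at or beyond the block's end.  Such a crossing window is a clean tail of
   the block followed by a head (a clean run of length c - j ending in an
   error) of what comes next: a head of the block itself for x1 and x2, a
   head of the other block for the concatenation.  If one pairing of tails
   and heads has two crossing windows, cutting the longer tail down to the
   length of the shorter one and attaching the head of the other window gives
   a crossing window of the other pairing.  So N_c changes by at most one for
   0 < c < b, which accounts for the slack b - 1. *)

Section Windows.
Variable f : nat -> bool.

Definition dirty (i c : nat) : bool := has f (iota i c).

Definition next_err (i c : nat) : bool := ~~ dirty i c && f (i + c).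

Lemma dirty_cat i m l : dirty i (m + l) = dirty i m || dirty (i + m) l.
Proof. by rewrite /dirty iotaD has_cat. Qed.

Lemma dirtyS i c : dirty i c.+1 = dirty i c || f (i + c).
Proof. by rewrite -addn1 dirty_cat /dirty /= orbF. Qed.

Lemma dirty_sum_next_err i b : dirty i b = \sum_(c < b) next_err i c :> nat.
Proof.
elim: b => [|b IHb]; first by rewrite big_ord0.
by rewrite dirtyS big_ord_recr /= -IHb /next_err; case: (dirty i b); case: (f _).
Qed.

Lemma next_err_cat i m l : next_err i (m + l) = ~~ dirty i m && next_err (i + m) l.
Proof. by rewrite /next_err dirty_cat negb_or addnA andbA. Qed.

Lemma next_err_disjoint i i' c :
  next_err i c -> next_err i' c -> i < i' -> i + c < i'.
Proof.
move=> /andP[_ err_ic] /andP[clean_i'c _] lt_ii'.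
rewrite ltnNge; apply: contra clean_i'c => le_i'ic.
by apply/hasP; exists (i + c); rewrite // mem_iota le_i'ic ltn_add2r.
Qed.

End Windows.

Lemma eq_dirty (f f' : nat -> bool) i i' c :
  (forall p, p < c -> f (i + p) = f' (i' + p)) -> dirty f i c = dirty f' i' c.
Proof.
move=> eq_ff'; rewrite /dirty -[i]addn0 -[i']addn0 !iotaDl !has_map.
by apply: eq_in_has => p; rewrite mem_iota => /= /eq_ff'.
Qed.

Lemma eq_next_err (f f' : nat -> bool) i i' c :
  (forall p, p <= c -> f (i + p) = f' (i' + p)) -> next_err f i c = next_err f' i' c.
Proof.
move=> eq_ff'; rewrite /next_err eq_ff' // (@eq_dirty f f' i i') // => p lt_pc.
exact/eq_ff'/ltnW.
Qed.

Lemma next_err_periodic (f : nat -> bool) n :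
  (forall p, f (p + n) = f p) -> forall i c, next_err f (i + n) c = next_err f i c.
Proof. by move=> f_per i c; apply: eq_next_err => p _; rewrite addnAC f_per. Qed.

Definition splits (T H : nat -> bool) (c : nat) : Prop :=
  exists2 j, 0 < j <= c & T j && H (c - j).

Lemma splits_exchange (TA TB HA HB : nat -> bool) c :
  (forall j j', j' <= j -> TA j -> TA j') ->
  (forall j j', j' <= j -> TB j -> TB j') ->
  splits TA HB c -> splits TB HA c -> splits TA HA c \/ splits TB HB c.
Proof.
move=> TA_le TB_le [j1 hj1 /andP[TA1 HB1]] [j2 hj2 /andP[TB2 HA2]].
case: (leqP j2 j1) => [le21 | lt12].
- by left; exists j2; rewrite // HA2 (TA_le j1).
- by right; exists j1; rewrite // HB1 (TB_le j2) // ltnW.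
Qed.

Section Block.
Variables (f : nat -> bool) (s n : nat).

Definition err_count c := \sum_(i < n) next_err f (s + i) c.

Definition dirty_count b := \sum_(i < n) dirty f (s + i) b.

Definition inner_count c := \sum_(i < n | i + c < n) next_err f (s + i) c.

Definition seam_err c : bool := [exists i : 'I_n, (n <= i + c) && next_err f (s + i) c].

Definition tail_clean j := (j <= n) && ~~ dirty f (s + n - j) j.

Lemma dirty_count_sum b : dirty_count b = \sum_(c < b) err_count c.
Proof.
rewrite /dirty_count /err_count exchange_big /=.
by apply: eq_bigr => i _; rewrite dirty_sum_next_err.
Qed.

Lemma err_count_split c : err_count c = inner_count c + seam_err c.
Proof.
rewrite /err_count (bigID (fun i : 'I_n => i + c < n)) /=; congr (_ + _).
rewrite /seam_err; case: existsP => [[i0 /andP[seam_i0 err_i0]] | no_seam].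
- rewrite (bigD1 i0) -?leqNgt //= err_i0 big1 // => i /andP[seam_i ne_ii0].
  apply/eqP; rewrite eqb0; apply/negP => err_i; rewrite -leqNgt in seam_i.
  have [lt_ii0 | lt_i0i | /val_inj eq_ii0] := ltngtP i i0.
  + by have := ltn_ord i0; have := next_err_disjoint err_i err_i0; lia.
  + by have := ltn_ord i; have := next_err_disjoint err_i0 err_i; lia.
  + by rewrite eq_ii0 eqxx in ne_ii0.
- rewrite big1 // => i seam_i; apply/eqP; rewrite eqb0; apply/negP => err_i.
  by apply: no_seam; exists i; rewrite leqNgt seam_i.
Qed.

Lemma seam_err0 : seam_err 0 = false.
Proof. by apply/existsP => -[i]; rewrite addn0 leqNgt ltn_ord. Qed.

Lemma tail_clean_le j j' : j' <= j -> tail_clean j -> tail_clean j'.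
Proof.
move=> le_j'j /andP[le_jn clean_j]; rewrite /tail_clean (leq_trans le_j'j) //=.
move: clean_j; rewrite -(subnK le_j'j) dirty_cat negb_or => /andP[_].
by have -> : s + n - (j - j' + j') + (j - j') = s + n - j' by lia.
Qed.

Lemma tail_head_next_err j c :
  0 < j <= c -> tail_clean j -> next_err f (s + n) (c - j) -> next_err f (s + n - j) c.
Proof.
move=> /andP[_ le_jc] /andP[le_jn clean_j] err_j.
rewrite -(subnKC le_jc) next_err_cat clean_j.
by have -> : s + n - j + j = s + n by lia.
Qed.

Lemma seam_errP c : reflect (splits tail_clean (next_err f (s + n)) c) (seam_err c).
Proof.
apply: (iffP existsP) => [[i /andP[seam_i err_i]] | [j hj /andP[tail_j err_j]]].
- have lt_in := ltn_ord i.
  exists (n - i); first by apply/andP; split; lia.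
  rewrite /tail_clean leq_subr /=.
  have -> : s + n - (n - i) = s + i by lia.
  have -> : s + n = s + i + (n - i) by lia.
  by rewrite -next_err_cat subnKC //; lia.
- have /andP[le_jn _] := tail_j.
  have lt_nj_n : n - j < n by lia.
  exists (Ordinal lt_nj_n); apply/andP; split => /=; first lia.
  have -> : s + (n - j) = s + n - j by lia.
  exact: tail_head_next_err.
Qed.

End Block.

Lemma err_count_add f s m n c :
  err_count f s (m + n) c = err_count f s m c + err_count f (s + m) n c.
Proof.
rewrite /err_count big_split_ord; congr (_ + _).
by apply: eq_bigr => i _; rewrite /= addnA.
Qed.

Section Concat.
Variables (k r : nat) (f1 f2 g : nat -> bool).
Hypotheses (f1_per : forall p, f1 (p + k) = f1 p) (f2_per : forall p, f2 (p + r) = f2 p).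
Hypothesis g_per : forall p, g (p + (k + r)) = g p.
Hypotheses (g_f1 : forall p, p < k -> g p = f1 p) (g_f2 : forall p, p < r -> g (k + p) = f2 p).

Lemma inner_count_catl c : inner_count g 0 k c = inner_count f1 0 k c.
Proof.
apply: eq_bigr => i inner_i; congr (nat_of_bool _); apply: eq_next_err => p le_pc.
by rewrite !add0n g_f1 //; lia.
Qed.

Lemma inner_count_catr c : inner_count g k r c = inner_count f2 0 r c.
Proof.
apply: eq_bigr => i inner_i; congr (nat_of_bool _); apply: eq_next_err => p le_pc.
by rewrite -addnA g_f2 //; lia.
Qed.

Lemma tail_clean_catl : tail_clean g 0 k =1 tail_clean f1 0 k.
Proof.
move=> j; rewrite /tail_clean; case: leqP => //= le_jk.
by congr negb; apply: eq_dirty => p lt_pj; rewrite g_f1 //; lia.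
Qed.

Lemma tail_clean_catr : tail_clean g k r =1 tail_clean f2 0 r.
Proof.
move=> j; rewrite /tail_clean; case: leqP => //= le_jr.
congr negb; apply: eq_dirty => p lt_pj.
have -> : k + r - j + p = k + (r - j + p) by lia.
by rewrite g_f2 //; lia.
Qed.

Lemma head_catl l : l < r -> next_err g (0 + k) l = next_err f2 (0 + r) l.
Proof.
move=> lt_lr; rewrite (next_err_periodic f2_per); apply: eq_next_err => p le_pl.
by rewrite g_f2 //; lia.
Qed.

Lemma head_catr l : l < k -> next_err g (k + r) l = next_err f1 (0 + k) l.
Proof.
move=> lt_lk; rewrite -[k + r]add0n (next_err_periodic g_per) (next_err_periodic f1_per).
apply: eq_next_err => p le_pl.
by rewrite g_f1 //; lia.
Qed.

Lemma seam_err_cat_to_parts c :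
  seam_err g 0 k c -> seam_err g k r c -> seam_err f1 0 k c || seam_err f2 0 r c.
Proof.
move=> /seam_errP[j1 hj1 /andP[tail1 head1]] /seam_errP[j2 hj2 /andP[tail2 head2]].
have /andP[le_j1k _] := tail1; have /andP[le_j2r _] := tail2.
have err1 := tail_head_next_err hj1 tail1 head1.
have err2 := tail_head_next_err hj2 tail2 head2.
have err1' : next_err g (0 + k - j1 + (k + r)) c by rewrite (next_err_periodic g_per).
(* The two crossing windows are disjoint, so each head ends inside the block
   it enters. *)
have := next_err_disjoint err1 err2; have := next_err_disjoint err2 err1' => short2 short1.
have [] := @splits_exchange (tail_clean f1 0 k) (tail_clean f2 0 r)
  (next_err f1 (0 + k)) (next_err f2 (0 + r)) c (@tail_clean_le _ _ _) (@tail_clean_le _ _ _).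
- by exists j1; rewrite // -tail_clean_catl tail1 -head_catl //; lia.
- by exists j2; rewrite // -tail_clean_catr tail2 -head_catr //; lia.
- by move/seam_errP ->.
- by move/seam_errP ->; rewrite orbT.
Qed.

Lemma seam_err_parts_to_cat c :
  seam_err f1 0 k c -> seam_err f2 0 r c -> seam_err g 0 k c || seam_err g k r c.
Proof.
move=> /seam_errP[j1 hj1 /andP[tail1 head1]] /seam_errP[j2 hj2 /andP[tail2 head2]].
have /andP[le_j1k _] := tail1; have /andP[le_j2r _] := tail2.
have err1 := tail_head_next_err hj1 tail1 head1.
have err2 := tail_head_next_err hj2 tail2 head2.
have err1' : next_err f1 (0 + k - j1 + k) c by rewrite (next_err_periodic f1_per).
have err2' : next_err f2 (0 + r - j2 + r) c by rewrite (next_err_periodic f2_per).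
(* A crossing window is disjoint from its translate by the period, so c < k
   and c < r: every head ends inside the block it enters. *)
have := next_err_disjoint err1 err1'; have := next_err_disjoint err2 err2' => lt_cr lt_ck.
have [] := @splits_exchange (tail_clean g 0 k) (tail_clean g k r)
  (next_err g (0 + k)) (next_err g (k + r)) c (@tail_clean_le _ _ _) (@tail_clean_le _ _ _).
- by exists j1; rewrite // tail_clean_catl tail1 head_catr //; lia.
- by exists j2; rewrite // tail_clean_catr tail2 head_catl //; lia.
- by move/seam_errP ->.
- by move/seam_errP ->; rewrite orbT.
Qed.

Lemma err_count_cat c :
  err_count f1 0 k c + err_count f2 0 r c <= err_count g 0 (k + r) c + (0 < c) /\
  err_count g 0 (k + r) c <= err_count f1 0 k c + err_count f2 0 r c + (0 < c).
Proof.
rewrite err_count_add add0n !err_count_split inner_count_catl inner_count_catr.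
case: c => [|c]; first by rewrite !seam_err0; lia.
move: (@seam_err_cat_to_parts c.+1) (@seam_err_parts_to_cat c.+1).
by case: (seam_err g 0 k _) (seam_err g k r _) (seam_err f1 0 k _) (seam_err f2 0 r _)
  => [] [] [] [] /=; lia.
Qed.

End Concat.

Lemma leq_sum_slack b (u w : 'I_b -> nat) :
  (forall c, u c <= w c + (0 < c)) -> \sum_(c < b) u c <= \sum_(c < b) w c + (b - 1).
Proof.
move=> le_uw; have -> : b - 1 = \sum_(c < b) (0 < c : nat).
  case: (b) => [|m]; first by rewrite big_ord0.
  by rewrite big_ord_recl /= subn1 sum_nat_const card_ord muln1.
by rewrite -big_split leq_sum.
Qed.

Section Mismatch.
Variables (F : eqType) (n : nat) (x y : 'rV[F]_n).

Definition mismatch (p : nat) : bool :=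
  if @insub _ _ 'I_n (p %% n) is Some i then x ord0 i != y ord0 i else false.

Lemma mismatch_ord (i : 'I_n) : mismatch i = (x ord0 i != y ord0 i).
Proof. by rewrite /mismatch modn_small // valK. Qed.

Lemma mismatch_periodic p : mismatch (p + n) = mismatch p.
Proof. by rewrite /mismatch modnDr. Qed.

Lemma mismatch_cyc_idx (i : 'I_n) j :
  (x ord0 (cyc_idx i j) != y ord0 (cyc_idx i j)) = mismatch (i + j).
Proof. by rewrite -mismatch_ord /mismatch /= modn_mod. Qed.

Lemma bread_neq b (i : 'I_n) : (bread b x i != bread b y i) = dirty mismatch i b.
Proof.
apply/negbLR; apply/eqP/hasPn => [eq_xy p | clean_xy].
- rewrite mem_iota => /andP[le_ip lt_p]; have lt_j : p - i < b by lia.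
  have := congr1 (fun w : {ffun _ -> _} => w (Ordinal lt_j)) eq_xy; rewrite !ffunE => /eqP.
  by rewrite -[_ == _]negbK mismatch_cyc_idx /= subnKC.
- apply/ffunP => j; rewrite !ffunE; apply/eqP.
  by rewrite -[_ == _]negbK mismatch_cyc_idx clean_xy // mem_iota leq_addr ltn_add2l /=.
Qed.

End Mismatch.

Lemma bdist_dirty_count (F : finFieldType) b n (x y : 'rV[F]_n) :
  bdist b x y = dirty_count (mismatch x y) 0 n b.
Proof.
rewrite /bdist /dirty_count -sum1_card big_mkcond /=.
by apply: eq_bigr => i _; rewrite inE bread_neq.
Qed.

Lemma mismatch_row_mxl (F : eqType) k r (x1 y1 : 'rV[F]_k) (x2 y2 : 'rV[F]_r) p :
  p < k -> mismatch (row_mx x1 x2) (row_mx y1 y2) p = mismatch x1 y1 p.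
Proof.
move=> lt_pk; have -> : p = lshift r (Ordinal lt_pk) by [].
by rewrite !mismatch_ord !row_mxEl.
Qed.

Lemma mismatch_row_mxr (F : eqType) k r (x1 y1 : 'rV[F]_k) (x2 y2 : 'rV[F]_r) p :
  p < r -> mismatch (row_mx x1 x2) (row_mx y1 y2) (k + p) = mismatch x2 y2 p.
Proof.
move=> lt_pr; have -> : k + p = rshift k (Ordinal lt_pr) by [].
by rewrite mismatch_ord !row_mxEr (mismatch_ord x2 y2 (Ordinal lt_pr)).
Qed.

Theorem lemma3p1 (F : finFieldType) (b k r : nat)
  (hb : 0 < b) (hk : 0 < k) (hr : 0 < r)
  (x1 y1 : 'rV[F]_k) (x2 y2 : 'rV[F]_r) :
  (bdist b x1 y1 + bdist b x2 y2 <= bdist b (row_mx x1 x2) (row_mx y1 y2) + (b - 1))%N /\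
  (bdist b (row_mx x1 x2) (row_mx y1 y2) <= bdist b x1 y1 + bdist b x2 y2 + (b - 1))%N.
Proof.
have cat_bounds := err_count_cat (mismatch_periodic x1 y1) (mismatch_periodic x2 y2)
  (mismatch_periodic (row_mx x1 x2) (row_mx y1 y2))
  (mismatch_row_mxl x1 y1 x2 y2) (mismatch_row_mxr x1 y1 x2 y2).
rewrite !bdist_dirty_count !dirty_count_sum -big_split /=.
by split; apply: leq_sum_slack => c; have [] := cat_bounds c.
Qed.
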